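(* Let $\mathcal{X}$ be a finite set and $\underline{Q}$ a lower transition rate operator on $\mathcal{L}(\mathcal{X})$. Then for any $t>0$: $\underline{Q}$ is ergodic if and only if $\underline{T}_t$ is ergodic.
   Context: $\mathcal{L}(\mathcal{X})$ is the set of real-valued functions on $\mathcal{X}$ with pointwise operations and order, real constants identified with constant functions, $\mathbb{I}_y$ the indicator of $\{y\}$. A lower transition rate operator is a map $\underline{Q}\colon\mathcal{L}(\mathcal{X})\to\mathcal{L}(\mathcal{X})$ such that for all $f,g$, $\lambda\ge0$, $\mu\in\mathbb{R}$, $x,y\in\mathcal{X}$: $\underline{Q}(\mu)=0$; $\underline{Q}(f+g)\ge\underline{Q}f+\underline{Q}g$; $\underline{Q}(\lambda f)=\lambda\underline{Q}f$; $x\ne y\Rightarrow\underline{Q}(\mathbb{I}_y)(x)\ge0$. For each $f$, $t\mapsto\underline{T}_tf$ is the unique solution on $[0,\infty)$ of $\frac{d}{dt}\underline{T}_tf=\underline{Q}\,\underline{T}_tf$ with $\underline{T}_0f=f$ (existence and uniqueness are known); $\underline{T}_t$ denotes the operator $f\mapsto\underline{T}_tf$. $\underline{Q}$ is ergodic if for all $f$, $\lim_{t\to\infty}\underline{T}_tf$ exists and is a constant function. A map $\underline{T}\colon\mathcal{L}(\mathcal{X})\to\mathcal{L}(\mathcal{X})$ (here $\underline{T}=\underline{T}_t$) is ergodic if for all $f$, $\lim_{n\to\infty}\underline{T}^nf$ exists and is a constant function, where $\underline{T}^n$ is the $n$-fold composition. *)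

From HB Require Import structures.
From mathcomp Require Import all_boot all_order all_algebra.
From mathcomp Require Import all_classical all_reals all_analysis.
Set Implicit Arguments. Unset Strict Implicit. Unset Printing Implicit Defensive.
Import Order.TTheory GRing.Theory Num.Theory.
Import numFieldNormedType.Exports.
Local Open Scope ring_scope.
Local Open Scope classical_set_scope.

Section Defs.
Variables (R : realType) (X : finType).

Definition indic (y : X) : X -> R := fun z => if z == y then 1 else 0.

Definition lower_rate_op (Q : (X -> R) -> (X -> R)) : Prop :=
  [/\ (forall mu : R, Q (fun _ => mu) = (fun _ => 0)),
      (forall f g x, Q f x + Q g x <= Q (fun z => f z + g z) x),
      (forall (lam : R) f, 0 <= lam -> Q (fun z => lam * f z) = (fun x => lam * Q f x)) &
      (forall x y : X, x != y -> 0 <= Q (indic y) x)].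

(* T is the (unique) solution semigroup: for every f, t |-> T t f solves
   d/dt T_t f = Q (T_t f) on [0, +oo) (right derivative at 0), T_0 f = f. *)
Definition lower_semigroup (Q : (X -> R) -> (X -> R))
    (T : R -> (X -> R) -> (X -> R)) : Prop :=
  forall f : X -> R,
    T 0 f = f /\
    (forall x : X,
       (forall t : R, 0 < t -> is_derive t 1 (fun s => T s f x) (Q (T t f) x)) /\
       ((fun h : R => h^-1 * (T h f x - f x)) @ 0^'+ --> Q f x)).

(* Q is ergodic: lim_{t -> oo} T_t f exists and is constant, for all f *)
Definition ergodic_rate (T : R -> (X -> R) -> (X -> R)) : Prop :=
  forall f : X -> R, exists c : R,
    forall x : X, (fun t : R => T t f x) @ +oo --> c.

Definition ergodic_map (T : (X -> R) -> (X -> R)) : Prop :=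
  forall f : X -> R, exists c : R,
    forall x : X, (fun n : nat => iter n T f x) @ \oo --> c.

End Defs.

(* Everything rests on a comparison principle for solutions of du/dt = Q u.
   A lower rate operator is superadditive, positively homogeneous and invariant
   under adding constants, which yields the one-sided Lipschitz estimate
     Q U x - Q V x <= B * sum_y (U y - V y - c)^+   whenever U x - V x > c.
   So if u, v solve the equation with u 0 - v 0 <= c, the energy
   e = sum_x ((u - v - c)^+)^2 satisfies e' <= K e and e 0 = 0, whence e = 0 and
   u - v <= c at all times.  Comparison gives uniqueness, hence the semigroup law
   T_(s+r) = T_s T_r and T_t^n = T_(n t), and shows that T_s does not increase the
   sup-distance to a constant.  Ergodicity of Q therefore passes to the sequence
   T_(n t); conversely, for s = n t + r with 0 <= r < t, T_s f = T_r (T_t^n f)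
   stays as close to the limit constant as T_t^n f does. *)

From Pilot Require Import Defs.
From HB Require Import structures.
From mathcomp Require Import all_boot all_order all_algebra.
From mathcomp Require Import all_classical all_reals all_analysis.
From mathcomp Require Import ring lra.
Import Order.TTheory GRing.Theory Num.Theory.
Import numFieldNormedType.Exports.
Set Implicit Arguments.
Unset Strict Implicit.
Unset Printing Implicit Defensive.
Local Open Scope ring_scope.
Local Open Scope classical_set_scope.

Section LowerRateOperator.
Variables (R : realType) (X : finType) (Q : (X -> R) -> X -> R).
Hypothesis HQ : lower_rate_op Q.

Lemma lower_rate_cst (mu : R) : Q (fun _ => mu) = fun _ => 0.
Proof. by case: HQ => cstQ _ _ _; apply: cstQ. Qed.

Lemma lower_rate_superadd f g x : Q f x + Q g x <= Q (fun z => f z + g z) x.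
Proof. by case: HQ => _ addQ _ _; apply: addQ. Qed.

Lemma lower_rate_scale (lam : R) f x :
  0 <= lam -> Q (fun z => lam * f z) x = lam * Q f x.
Proof. by case: HQ => _ _ homQ _ lam0; rewrite homQ. Qed.

Lemma lower_rate_indic x y : x != y -> 0 <= Q (Defs.indic R y) x.
Proof. by case: HQ => _ _ _ indicQ; apply: indicQ. Qed.

Lemma lower_rate_sum (I : Type) (r : seq I) (F : I -> X -> R) x :
  \sum_(i <- r) Q (F i) x <= Q (fun z => \sum_(i <- r) F i z) x.
Proof.
elim: r => [|i r IHr].
  rewrite big_nil (_ : (fun z => \sum_(j <- [::]) F j z) = fun _ => 0).
    by rewrite lower_rate_cst.
  by apply/funext => z; rewrite big_nil.
rewrite big_cons (_ : (fun z => \sum_(j <- i :: r) F j z) =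
  fun z => F i z + \sum_(j <- r) F j z).
  by apply: le_trans _ (lower_rate_superadd _ _ _); rewrite lerD2l.
by apply/funext => z; rewrite big_cons.
Qed.

Lemma lower_rate_addc f (m : R) : Q (fun z => f z + m) = Q f.
Proof.
apply/funext => x; apply/le_anti/andP; split.
  have := lower_rate_superadd (fun z => f z + m) (fun _ => - m) x.
  under [in X in _ <= X -> _]eq_fun do rewrite addrK.
  by rewrite lower_rate_cst addr0.
by have := lower_rate_superadd f (fun _ => m) x; rewrite lower_rate_cst addr0.
Qed.

Lemma fun_sum_indic (f : X -> R) : f = fun z => \sum_y f y * Defs.indic R y z.
Proof.
apply/funext => z; rewrite (bigD1 z) //= /Defs.indic eqxx mulr1 big1 ?addr0 //.
by move=> y yz; rewrite eq_sym (negbTE yz) mulr0.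
Qed.

(* The off-diagonal sign condition, spread by superadditivity over the
   indicator decomposition. *)
Lemma lower_rate_ge0 g x : (forall z, 0 <= g z) -> g x = 0 -> 0 <= Q g x.
Proof.
move=> g_ge0 gx0; rewrite [g in Q g]fun_sum_indic.
apply: le_trans _ (lower_rate_sum _ _ x); apply: sumr_ge0 => y _.
rewrite lower_rate_scale //; have [<-|xy] := eqVneq x y; first by rewrite gx0 mul0r.
by rewrite mulr_ge0 // lower_rate_indic.
Qed.

Definition rate_bound : R := \sum_x \sum_y `|Q (fun z => - Defs.indic R y z) x|.

Lemma rate_bound_ge0 : 0 <= rate_bound.
Proof. by apply: sumr_ge0 => x _; apply: sumr_ge0. Qed.

Lemma lower_rate_opp_ge N x : (forall z, 0 <= N z) ->
  - (rate_bound * \sum_y N y) <= Q (fun z => - N z) x.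
Proof.
move=> N_ge0; have -> : (fun z => - N z) = fun z => \sum_y N y * - Defs.indic R y z.
  apply/funext => z; rewrite [in LHS](fun_sum_indic N) -sumrN.
  by apply: eq_bigr => y _; rewrite mulrN.
apply: le_trans _ (lower_rate_sum _ _ x); rewrite mulr_sumr -sumrN.
apply: ler_sum => y _; rewrite lower_rate_scale // -mulNr mulrC ler_wpM2l //.
apply: lerNnormlW.
rewrite /rate_bound (bigD1 x) //= (bigD1 y) //= -addrA lerDl.
by rewrite addr_ge0 ?sumr_ge0 // => *; rewrite sumr_ge0.
Qed.

(* With P, N the positive and negative parts of U - V - c, V - U = N - P - c;
   N x = 0 gives Q N x >= 0, and Q (- P) is bounded below via rate_bound. *)
Lemma lower_rate_subr_le U V (c : R) x : c < U x - V x ->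
  Q U x - Q V x <= rate_bound * \sum_y Num.max (U y - V y - c) 0.
Proof.
move=> cx; set P := fun z => Num.max (U z - V z - c) 0.
set N := fun z => Num.max (c - (U z - V z)) 0.
have N_ge0 z : 0 <= N z by rewrite le_max lexx orbT.
have P_ge0 z : 0 <= P z by rewrite le_max lexx orbT.
have VUE : (fun z => V z - U z) = fun z => N z + - P z + - c.
  apply/funext => z; rewrite /N /P /=; have [h|h] := lerP (U z - V z - c) 0.
    by rewrite max_l; lra.
  by rewrite max_r; lra.
have QV : Q U x + Q (fun z => N z + - P z) x <= Q V x.
  have := lower_rate_superadd U (fun z => V z - U z) x.
  under [in X in _ <= X -> _]eq_fun do rewrite addrC subrK.
  by rewrite VUE lower_rate_addc.
have QNP := lower_rate_superadd N (fun z => - P z) x.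
have QN : 0 <= Q N x by apply: lower_rate_ge0 => //; rewrite /N max_r //; lra.
have := lower_rate_opp_ge x P_ge0; lra.
Qed.

End LowerRateOperator.

Lemma sqr_sum_le_card (R : realFieldType) (X : finType) (a : X -> R) :
  (\sum_x a x) ^+ 2 <= #|X|%:R * \sum_x a x ^+ 2.
Proof.
have sqrE : (\sum_x a x) ^+ 2 = \sum_x \sum_y a x * a y.
  by rewrite expr2 mulr_suml; apply: eq_bigr => x _; rewrite mulr_sumr.
have pairE : \sum_x \sum_y (a x ^+ 2 + a y ^+ 2) = 2 * (#|X|%:R * \sum_x a x ^+ 2).
  under eq_bigr do rewrite big_split /=.
  rewrite big_split /= (eq_bigr (fun x => a x ^+ 2 *+ #|X|)) => [|x _]; last first.
    by rewrite sumr_const.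
  by rewrite sumr_const (_ : #|xpredT| = #|X|) // sumrMnl -mulr_natl; ring.
rewrite sqrE -(ler_pM2l (_ : 0 < 2)) // -pairE mulr_sumr.
apply: ler_sum => x _; rewrite mulr_sumr; apply: ler_sum => y _.
by have := sqr_ge0 (a x - a y); rewrite sqrrB -mulr_natl; lra.
Qed.

Section RealAnalysis.
Variable R : realType.

Lemma is_derive_sqr_max0 (z : R) :
  is_derive z 1 (fun y : R => Num.max y 0 ^+ 2) (2 * Num.max z 0).
Proof.
have taylor (h : R) :
    `|Num.max (h + z) 0 ^+ 2 - Num.max z 0 ^+ 2 - 2 * Num.max z 0 * h| <= h ^+ 2.
  by rewrite ler_norml; case: (lerP 0 z); case: (lerP 0 (h + z)) => *;
    apply/andP; split; nra.
set f := fun y : R => Num.max y 0 ^+ 2.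
have lim_quot : (fun h : R => h^-1 *: ((f \o shift z) (h *: 1) - f z)) @ 0^' -->
    2 * Num.max z 0.
  apply/cvgrPdist_le => e e0; near=> h.
  have h0 : h != 0 by near: h; exact: nbhs_dnbhs_neq.
  have he : `|h| < e by near: h; exact: (nbhs_dnbhs (nbhs0_lt e0)).
  have hpos : 0 < `|h| by rewrite normr_gt0.
  rewrite /f /= [h%:A]mulr1 -normrN opprB; apply: le_trans (ltW he).
  rewrite -(ler_pM2l hpos) -normrM mulrBr mulrA mulfV // mul1r.
  rewrite -normrM -expr2 [X in _ <= X]ger0_norm ?sqr_ge0 // (mulrC h).
  exact: taylor.
by apply: (DeriveDef (cvgP _ lim_quot)); apply: cvg_lim.
Unshelve. all: by end_near. Qed.

Lemma is_derive_sumr (I : Type) (r : seq I) (F : I -> R -> R) (dF : I -> R)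
    (s : R) :
  (forall i, is_derive s 1 (F i) (dF i)) ->
  is_derive s 1 (fun t => \sum_(i <- r) F i t) (\sum_(i <- r) dF i).
Proof.
move=> FD; elim: r => [|i r IHr].
  rewrite big_nil (_ : (fun t => \sum_(j <- [::]) F j t) = cst 0).
    exact: is_derive_cst.
  by apply/funext => t; rewrite big_nil.
rewrite big_cons (_ : (fun t => \sum_(j <- i :: r) F j t) =
  F i + fun t => \sum_(j <- r) F j t); first exact: is_deriveD.
by apply/funext => t; rewrite big_cons.
Qed.

Lemma derive_le0_le_at0 (f df : R -> R) :
  f x @[x --> 0^'+] --> f 0 ->
  (forall s : R, 0 < s -> is_derive s 1 f (df s)) ->
  (forall s : R, 0 < s -> df s <= 0) ->
  forall b : R, 0 < b -> f b <= f 0.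
Proof.
move=> f0 fD df_le0 b b0; apply: (cvgr_to_ge f0); near=> d.
have d0 : 0 < d by near: d; exact: nbhs_right_gt.
have db : d < b by near: d; exact: nbhs_right_lt.
have pos x : x \in `[d, b]%R -> 0 < x.
  by rewrite in_itv /= => /andP[+ _]; exact: lt_le_trans.
have f_cont : {within `[d, b], continuous f}.
  by apply: derivable_within_continuous => x /pos /fD [].
apply: (ler0_derive1_le_cc _ _ f_cont); rewrite ?in_itv /= ?lexx ?(ltW db) //.
- by move=> x /subset_itv_oo_cc /pos /fD [].
- move=> x /subset_itv_oo_cc /pos x0; rewrite derive1E.
  by have [_ ->] := fD x x0; apply: df_le0.
Unshelve. all: by end_near. Qed.

End RealAnalysis.

Section Comparison.
Variables (R : realType) (X : finType) (Q : (X -> R) -> X -> R).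
Hypothesis HQ : lower_rate_op Q.

Definition rate_solution (u : R -> X -> R) := forall x,
  (forall s : R, 0 < s -> is_derive s 1 (fun t => u t x) (Q (u s) x)) /\
  (fun t => u t x) @ 0^'+ --> u 0 x.

Variables (u v : R -> X -> R) (c : R).
Hypotheses (u_sol : rate_solution u) (v_sol : rate_solution v)
  (uv0 : forall x, u 0 x - v 0 x <= c).

Let excess x t := u t x - v t x - c.
Let energy t := \sum_x Num.max (excess x t) 0 ^+ 2.
Let denergy s := \sum_x 2 * Num.max (excess x s) 0 * (Q (u s) x - Q (v s) x).
Let K := 2 * rate_bound Q * #|X|%:R.
Let damped t := energy t * expR (- K * t).

Lemma energy0 : energy 0 = 0.
Proof.
by rewrite /energy big1 // => x _; rewrite max_r ?expr0n // /excess subr_le0.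
Qed.

Lemma is_derive_energy (s : R) : 0 < s -> is_derive s 1 energy (denergy s).
Proof.
move=> s0; apply: is_derive_sumr => x.
have [du _] := u_sol x; have [dv _] := v_sol x.
have dexcess := is_deriveB (is_deriveB (du s s0) (dv s s0)) (is_derive_cst c s 1).
rewrite subr0 in dexcess.
exact: is_derive1_comp (is_derive_sqr_max0 _) dexcess.
Qed.

(* Grönwall-type bound: the one-sided Lipschitz estimate and Cauchy-Schwarz. *)
Lemma denergy_le (s : R) : denergy s <= K * energy s.
Proof.
pose a x := Num.max (excess x s) 0; set S := \sum_y a y.
have a_ge0 x : 0 <= a x by rewrite le_max lexx orbT.
have termwise x :
    2 * a x * (Q (u s) x - Q (v s) x) <= 2 * a x * (rate_bound Q * S).
  rewrite /a; case: (lerP (excess x s) 0) => [_|pos].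
    by rewrite mulr0 !mul0r.
  apply: ler_wpM2l; first by rewrite mulr_ge0 // ltW.
  by apply: (lower_rate_subr_le HQ); rewrite -subr_gt0.
apply: le_trans (ler_sum _ (fun x _ => termwise x)) _.
have := sqr_sum_le_card a; have := rate_bound_ge0 Q.
rewrite -mulr_suml -mulr_sumr -/S /K /energy (eq_bigr (fun x => a x ^+ 2)) //.
by move=> B_ge0 sum_le; nra.
Qed.

Lemma damped_right_cont : damped t @[t --> 0^'+] --> damped 0.
Proof.
apply: cvgM.
  apply: cvg_big => [|x _]; first exact: add_continuous.
  have [_ u0] := u_sol x; have [_ v0] := v_sol x.
  have sqr_max0_cont : {for excess x 0, continuous (fun y : R => Num.max y 0 ^+ 2)}.
    apply: differentiable_continuous; apply/derivable1_diffP.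
    by case: (is_derive_sqr_max0 (excess x 0)).
  exact: cvg_comp (cvgB (cvgB u0 v0) (cvg_cst c)) sqr_max0_cont.
apply: cvg_at_right_filter.
apply: (@continuous_comp _ _ _ ( *%R (- K)) expR).
  exact: mulrl_continuous.
exact: continuous_expR.
Qed.

Lemma is_derive_damped (s : R) : 0 < s ->
  is_derive s 1 damped (expR (- K * s) * (denergy s - K * energy s)).
Proof.
move=> s0; have dexp := is_derive1_comp (is_derive_expR (- K * s))
  (is_deriveZ (- K) (is_derive_id s 1)).
apply: is_derive_eq (is_deriveM (is_derive_energy s0) dexp) _.
rewrite [(- K)%:A]mulr1.
change (energy s * (expR (- K * s) * - K) + expR (- K * s) * denergy s =
  expR (- K * s) * (denergy s - K * energy s)); ring.
Qed.

Lemma rate_comparison (b : R) : 0 <= b -> forall x, u b x - v b x <= c.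
Proof.
rewrite le_eqVlt => /orP[/eqP <-|b0] x; first exact: uv0.
have damped_le : damped b <= damped 0.
  apply: (derive_le0_le_at0 damped_right_cont is_derive_damped) => // s _.
  by rewrite pmulr_rle0 ?expR_gt0 // subr_le0 denergy_le.
have energy_le0 : energy b <= 0.
  by move: damped_le; rewrite /damped energy0 mul0r pmulr_lle0 ?expR_gt0.
have sq_le0 : Num.max (excess x b) 0 ^+ 2 <= 0.
  apply: le_trans energy_le0; rewrite /energy (bigD1 x) //= lerDl.
  by apply: sumr_ge0 => y _; rewrite sqr_ge0.
rewrite -subr_le0 -/(excess x b); move: sq_le0.
case: (lerP (excess x b) 0) => // pos.
by rewrite leNgt (exprn_gt0 _ pos).
Qed.

End Comparison.

Section LowerSemigroup.
Variables (R : realType) (X : finType) (Q : (X -> R) -> X -> R)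
  (T : R -> (X -> R) -> X -> R).
Hypotheses (HQ : lower_rate_op Q) (HT : lower_semigroup Q T).

Lemma lower_semigroup0 f : T 0 f = f.
Proof. by case: (HT f). Qed.

(* Right continuity at 0 follows from the existence of the right derivative there. *)
Lemma rate_solution_semigroup f : rate_solution Q (fun s => T s f).
Proof.
move=> x; have [_ /(_ x) [fD fD0]] := HT f; split; first exact: fD.
rewrite lower_semigroup0.
have lim : (fun h : R => f x + h * (h^-1 * (T h f x - f x))) @ 0^'+ -->
    f x + 0 * Q f x.
  apply: cvgD; first exact: cvg_cst.
  by apply: cvgM _ fD0; apply: cvg_at_right_filter; exact: cvg_id.
rewrite mul0r addr0 in lim; apply: cvg_trans lim; apply: near_eq_cvg.
near=> h; have h0 : 0 < h by near: h; exact: nbhs_right_gt.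
by rewrite mulrA mulfV ?gt_eqF // mul1r addrC subrK.
Unshelve. all: by end_near. Qed.

Lemma rate_solution_cst (k : R) : rate_solution Q (fun _ _ => k).
Proof.
move=> x; split; last exact: cvg_cst.
by move=> s _; rewrite (lower_rate_cst HQ); exact: is_derive_cst.
Qed.

Lemma rate_solution_shift f (r : R) : 0 < r -> rate_solution Q (fun s => T (s + r) f).
Proof.
move=> r0 x; have [_ /(_ x) [fD _]] := HT f; split.
  move=> s s0; rewrite -[Q _ x]mulr1.
  exact: (@is_derive1_comp _ _ (shift r) _ _ _ (fD _ (addr_gt0 s0 r0))
    (is_derive_shift s 1 r)).
have f_cont : {for r, continuous (fun t => T t f x)}.
  apply: differentiable_continuous; apply/derivable1_diffP.
  by case: (fD r r0).
have shift_lim : (fun t : R => t + r) @ 0^'+ --> r.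
  rewrite -[X in _ --> X]add0r; apply: cvgD; last exact: cvg_cst.
  by apply: cvg_at_right_filter; exact: cvg_id.
by rewrite add0r; exact: cvg_comp shift_lim f_cont.
Qed.

(* Both sides solve the equation with the same initial value: compare both ways. *)
Lemma lower_semigroupD f (r s : R) : 0 <= r -> 0 <= s -> T (s + r) f = T s (T r f).
Proof.
rewrite le_eqVlt => /orP[/eqP <-|r0] s0; first by rewrite addr0 lower_semigroup0.
have init y : T (0 + r) f y - T 0 (T r f) y <= 0 by rewrite add0r lower_semigroup0 subrr.
have init' y : T 0 (T r f) y - T (0 + r) f y <= 0 by rewrite add0r lower_semigroup0 subrr.
apply/funext => x; apply/le_anti/andP; split; rewrite -subr_le0.
  exact: (rate_comparison HQ (rate_solution_shift f r0) (rate_solution_semigroup _) init).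
exact: (rate_comparison HQ (rate_solution_semigroup _) (rate_solution_shift f r0) init').
Qed.

Lemma iter_lower_semigroup f (t : R) n : 0 <= t -> iter n (T t) f = T (n%:R * t) f.
Proof.
move=> t0; elim: n => [|n IHn]; first by rewrite mul0r lower_semigroup0.
by rewrite iterS IHn -lower_semigroupD ?mulr_ge0 // mulrS mulrDl mul1r.
Qed.

Lemma lower_semigroup_dist_cst g (k eps : R) : (forall y, `|g y - k| <= eps) ->
  forall s, 0 <= s -> forall x, `|T s g x - k| <= eps.
Proof.
move=> gk s s0 x; rewrite ler_norml; apply/andP; split.
  rewrite lerNl opprB.
  apply: (rate_comparison HQ (rate_solution_cst k) (rate_solution_semigroup g)) => // y.
  by rewrite lower_semigroup0 (le_trans (ler_norm _)) // distrC gk.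
apply: (rate_comparison HQ (rate_solution_semigroup g) (rate_solution_cst k)) => // y.
by rewrite lower_semigroup0 (le_trans (ler_norm _)) ?gk.
Qed.

Lemma ergodic_rate_map (t : R) : 0 < t -> ergodic_rate T -> ergodic_map (T t).
Proof.
move=> t0 erg f; have [c fc] := erg f; exists c => x.
have -> : (fun n : nat => iter n (T t) f x) =
    (fun s => T s f x) \o (fun n : nat => n%:R * t).
  by apply/funext => n; rewrite /= iter_lower_semigroup // ltW.
apply: cvg_comp (fc x); apply/cvgryPge => A.
move/cvgryPge: (@cvgr_idn R) => /(_ (A / t)).
by apply: filterS => n; rewrite ler_pdivrMr.
Qed.

Lemma ergodic_map_rate (t : R) : 0 < t -> ergodic_map (T t) -> ergodic_rate T.
Proof.
move=> t0 erg f; have [c fc] := erg f; exists c => x.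
apply/cvgrPdist_le => eps eps0.
have [N _ near_c] : \forall n \near \oo, forall y, `|iter n (T t) f y - c| <= eps.
  apply: filter_forall => y.
  by move/cvgrPdist_le: (fc y) => /(_ eps eps0); apply: filterS => n; rewrite distrC.
near=> s.
have Ns : N%:R * t <= s by near: s; apply: nbhs_pinfty_ge; rewrite num_real.
have st0 : 0 <= s / t by rewrite divr_ge0 ?ltW // (le_trans _ Ns) ?mulr_ge0 ?ltW.
pose n := Num.truncn (s / t).
have /andP[ns _] := truncn_itv st0.
have Nn : (N <= n)%N by rewrite truncn_ge_nat // ler_pdivlMr.
have r0 : 0 <= s - n%:R * t by rewrite subr_ge0 -ler_pdivlMr.
have -> : T s f x = T (s - n%:R * t) (iter n (T t) f) x.
  rewrite iter_lower_semigroup ?(ltW t0) //.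
  by rewrite -lower_semigroupD ?mulr_ge0 ?(ltW t0) // subrK.
by rewrite distrC; apply: lower_semigroup_dist_cst => //; exact: near_c.
Unshelve. all: by end_near. Qed.

End LowerSemigroup.

Theorem proposition9 (R : realType) (X : finType)
    (Q : (X -> R) -> (X -> R)) (T : R -> (X -> R) -> (X -> R)) :
  lower_rate_op Q -> lower_semigroup Q T ->
  forall t : R, 0 < t -> (ergodic_rate T <-> ergodic_map (T t)).
Proof.
move=> HQ HT t t0.
exact: conj (ergodic_rate_map HQ HT t0) (ergodic_map_rate HQ HT t0).
Qed.
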